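(* Let $n\ge1$, let $\eta=\begin{pmatrix}0&1\\1&0\end{pmatrix}^{\oplus n}\in\mathbb{F}_2^{2n\times2n}$, let $\omega=J-I\in\mathbb{F}_2^{2n\times 2n}$, and let $W\in\mathbb{F}_2^{2n\times2n}$ be the upper-triangular part, including the diagonal, of the complement $J-\eta$ (i.e. $W_{ik}=(J-\eta)_{ik}$ for $i\le k$ and $W_{ik}=0$ for $i>k$). Then $\omega=W^T\eta W$ and $W^2=I$.
   Context: All arithmetic is over $\mathbb{F}_2$. $J$ denotes the $2n\times 2n$ all-ones matrix and $I$ the identity; $\oplus$ denotes block-diagonal direct sum. *)

From mathcomp Require Import all_boot all_algebra.
Set Implicit Arguments. Unset Strict Implicit. Unset Printing Implicit Defensive.
Import GRing.Theory.
Local Open Scope ring_scope.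

(* Indices 0..2n-1 (0-based). Block k (0-based) occupies indices 2k, 2k+1. *)

(* eta = [[0,1],[1,0]]^{(+) n} : entry (i,k) is 1 iff i <> k and i, k lie in the same 2x2 block *)
Definition eta_mx (n : nat) : 'M['F_2]_(n.*2) :=
  \matrix_(i, k) (((i != k) && ((i : nat)./2 == (k : nat)./2))%:R).

Definition J_mx (n : nat) : 'M['F_2]_(n.*2) := const_mx 1.

Definition omega_mx (n : nat) : 'M['F_2]_(n.*2) := J_mx n - 1%:M.

Definition W_mx (n : nat) : 'M['F_2]_(n.*2) :=
  \matrix_(i, k) (if (i <= k)%N then (J_mx n - eta_mx n) i k else 0).

(** Split the index set into the blocks {2a, 2a+1} and write W = 1 + E and
    eta = B + 1, where B and E are the all-ones matrices on the pairs of
    blocks (a, c) with a = c and a < c respectively.  Every matrix of this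
    block-constant shape has a product with any other one in which each
    block index is counted twice, so all such products vanish over F_2.
    Hence W^2 = 1 + 2E + E^2 = 1 and
    W^T eta W = (1 + E^T)(B + 1)(1 + E) = B + E + E^T + 1 = J + 1 = J - I. *)

From mathcomp Require Import all_boot all_algebra.
Import GRing.Theory.
Local Open Scope ring_scope.

Lemma sum_ord_double_half (V : nmodType) (n : nat) (F : nat -> V) :
  \sum_(j < n.*2) F j./2 = (\sum_(a < n) F a) *+ 2.
Proof.
elim: n => [|n IHn]; first by rewrite !big_ord0 mul0rn.
rewrite doubleS !big_ord_recr /= IHn mulrnDl mulr2n.
by rewrite uphalf_double doubleK addrA.
Qed.

Section BlockConstant.

Variables (R : nzSemiRingType) (n : nat).

Definition blockmx (f : nat -> nat -> R) : 'M[R]_(n.*2) :=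
  \matrix_(i, k) f (i : nat)./2 (k : nat)./2.

Lemma trmx_blockmx (f : nat -> nat -> R) :
  (blockmx f)^T = blockmx (fun a c => f c a).
Proof. by apply/matrixP => i k; rewrite !mxE. Qed.

Lemma mul_blockmx_pchar2 (f g : nat -> nat -> R) :
  2 \in [pchar R] -> blockmx f *m blockmx g = 0.
Proof.
move=> char2; apply/matrixP => i k; rewrite !mxE.
under eq_bigr => j _ do rewrite !mxE.
pose h a := f (i : nat)./2 a * g a (k : nat)./2.
by rewrite (sum_ord_double_half _ _ h) mulr2n addrr_pchar2.
Qed.

End BlockConstant.

Arguments blockmx {R} n f.
Arguments trmx_blockmx {R n} f.
Arguments mul_blockmx_pchar2 {R n} f g.

Notation diag_blocks n := (blockmx n (fun a c => (a == c)%:R)).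
Notation upper_blocks n := (blockmx n (fun a c => (a < c)%:R)).

Lemma pchar_F2 : 2 \in [pchar 'F_2].
Proof. exact: pchar_Fp. Qed.

Lemma eta_mx_blocks n : eta_mx n = diag_blocks n + 1%:M.
Proof.
apply/matrixP => i k; rewrite !mxE.
by have [->|_] := eqVneq i k; rewrite ?eqxx ?addr0 ?(addrr_pchar2 pchar_F2).
Qed.

Lemma W_mx_blocks n : W_mx n = 1%:M + upper_blocks n.
Proof.
apply/matrixP => i k; rewrite !mxE.
have [->|_] := eqVneq i k; first by rewrite leqnn eqxx ltnn subr0 addr0.
rewrite add0r /=; case: (leqP i k) => ik.
- have [->|neb] := eqVneq (i : nat)./2 (k : nat)./2; first by rewrite ltnn subrr.
  by rewrite ltn_neqAle neb half_leq // subr0.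
- by rewrite ltnNge half_leq // ltnW.
Qed.

Lemma J_mx_blocks n :
  J_mx n = diag_blocks n + upper_blocks n + (upper_blocks n)^T.
Proof.
apply/matrixP => i k; rewrite trmx_blockmx !mxE.
by case: ltngtP; rewrite ?addr0 ?add0r.
Qed.

Lemma oppmx_F2 m p (A : 'M['F_2]_(m, p)) : - A = A.
Proof. by apply/matrixP => i k; rewrite mxE (oppr_pchar2 pchar_F2). Qed.

Lemma addmx_F2 m p (A : 'M['F_2]_(m, p)) : A + A = 0.
Proof. by apply/matrixP => i k; rewrite !mxE (addrr_pchar2 pchar_F2). Qed.

Theorem mainTheorem3 (n : nat) (hn : (1 <= n)%N) :
  omega_mx n = (W_mx n)^T *m eta_mx n *m W_mx n /\
  W_mx n *m W_mx n = 1%:M.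
Proof.
have blocks0 (f g : nat -> nat -> 'F_2) :
    blockmx n f *m blockmx n g = 0 by exact: mul_blockmx_pchar2 f g pchar_F2.
rewrite /omega_mx J_mx_blocks eta_mx_blocks W_mx_blocks.
rewrite [(_ + _)^T]raddfD /= trmx1 trmx_blockmx.
set E := upper_blocks n.
set ET := blockmx n (fun a c => (c < a)%:R).
rewrite !(mulmxDl, mulmxDr, mul1mx, mul0mx, mulmx1, blocks0, addr0, add0r).
rewrite oppmx_F2; split; last by rewrite -addrA addmx_F2 addr0.
rewrite -!addrA; congr (_ + _).
by rewrite [RHS]addrC [ET + E]addrC addrA.
Qed.
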